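(* Suppose $\partial A$ is a $C^2$ submanifold of $\mathbb R^K$ of dimension $|K|-1$ and the agent is flexible at $p_0$; in particular, $v_A$ is twice differentiable at $p_0$ with positive definite Hessian. Then there exist constants $C_{p_0,A}>0$ and $c_{p_0,A}>0$ such that for every information structure $\mathbf q$, $$C_{p_0,A}\,\mathbb E\|\mathbf q-p_0\|^2\ \ge\ \mathrm{VoI}_A(\mathbf q)\ \ge\ c_{p_0,A}\,\mathbb E\|\mathbf q-p_0\|^2.$$
   Context: Let $K$ be a finite set, signed measures on $K$ identified with $\mathbb R^K$, scalar product $\langle s,v\rangle=\sum_k s_kv_k$, Euclidean norm $\|\cdot\|$. $\Delta\subset\mathbb R^K$ is the simplex of probability distributions on $K$ (differentiability and Hessians of functions on $\Delta$ are taken along $\Delta$, i.e. in directions $s$ with $\sum_k s_k=0$). Fix $p_0\in\Delta$ with full support. $A\subset\mathbb R^K$ is a nonempty compact convex set; $v_A(p)=\max_{a\in A}\langle p,a\rangle$; $A^\star(p)=\arg\max_{a\in A}\langle p,a\rangle$. The agent is flexible at $p_0$ if (equivalently, under the $C^2$ boundary assumption): $p\mapsto A^\star(p)$ is single-valued near $p_0$ and a local diffeomorphism at $p_0$ onto its image in $\partial A$; or $A^\star(p_0)=\{a^\sharp\}$ with all principal curvatures of $\partial A$ at $a^\sharp$ (eigenvalues of the differential of the outer unit normal map) positive; or $v_A$ is twice differentiable at $p_0$ with positive definite Hessian. An information structure is a random variable $\mathbf q$ on $(\Omega,\mathcal F,\mathbb P)$ with values in $\Delta$ and $\mathbb E[\mathbf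 q]=p_0$; $\mathrm{VoI}_A(\mathbf q)=\mathbb E[v_A(\mathbf q)]-v_A(p_0)$. *)

From Stdlib Require Import Reals List ClassicalEpsilon.
Open Scope R_scope.

Section FiniteDim.
(* The finite set K is a type with a duplicate-free exhaustive enumeration
   enumK (these facts are hypotheses of the main theorem).  Signed measures on
   K are identified with vectors K -> R. *)
Variable K : Type.
Variable enumK : list K.

Definition vec := K -> R.

Definition sumK (f : K -> R) : R := fold_right Rplus 0 (map f enumK).

Definition kdot (s v : vec) : R := sumK (fun k => s k * v k).
Definition knorm (s : vec) : R := sqrt (kdot s s).

Definition vadd (x y : vec) : vec := fun k => x k + y k.
Definition vsub (x y : vec) : vec := fun k => x k - y k.
Definition vscale (t : R) (x : vec) : vec := fun k => t * x k.

Definition mxv (H : K -> K -> R) (s : vec) : vec := fun k => sumK (fun l => H k l * s l).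

Definition in_simplex (p : vec) : Prop := (forall k, 0 <= p k) /\ sumK p = 1.
Definition full_support (p : vec) : Prop := forall k, 0 < p k.

Definition ktangent (s : vec) : Prop := sumK s = 0.

Definition knonempty (A : vec -> Prop) : Prop := exists a, A a.
Definition kconvex (A : vec -> Prop) : Prop :=
  forall a b t, A a -> A b -> 0 <= t <= 1 ->
    A (vadd (vscale t a) (vscale (1 - t) b)).
Definition kbounded (A : vec -> Prop) : Prop :=
  exists M, forall a, A a -> knorm a <= M.
Definition kclosed (A : vec -> Prop) : Prop :=
  forall x, (forall eps, 0 < eps -> exists a, A a /\ knorm (vsub x a) < eps) -> A x.
Definition kcompact (A : vec -> Prop) : Prop := kclosed A /\ kbounded A.

(* v_A(p) = max_{a in A} <p,a> (well defined for A knonempty kcompact) *)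
Definition is_max_value (A : vec -> Prop) (p : vec) (v : R) : Prop :=
  (exists a, A a /\ kdot p a = v) /\ (forall a, A a -> kdot p a <= v).
Definition vA (A : vec -> Prop) (p : vec) : R :=
  epsilon (inhabits 0) (is_max_value A p).

Definition kboundary (A : vec -> Prop) (x : vec) : Prop :=
  forall eps, 0 < eps ->
    (exists a, A a /\ knorm (vsub x a) < eps) /\
    (exists b, ~ A b /\ knorm (vsub x b) < eps).

(* g is C^2 on the open ball B(a,r): Dg is its (Gateaux) gradient, D2g its
   Hessian, given by directional derivatives, with D2g continuous on the ball
   (hence g is C^2 in the Frechet sense). *)
Definition C2_on_ball (a : vec) (r : R) (g : vec -> R) (Dg : vec -> vec)
    (D2g : vec -> K -> K -> R) : Prop :=
  (forall x, knorm (vsub x a) < r -> forall w,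
      derivable_pt_lim (fun t => g (vadd x (vscale t w))) 0 (kdot (Dg x) w)) /\
  (forall x, knorm (vsub x a) < r -> forall w w',
      derivable_pt_lim (fun t => kdot (Dg (vadd x (vscale t w))) w') 0
                       (kdot (mxv (D2g x) w) w')) /\
  (forall x, knorm (vsub x a) < r -> forall eps, 0 < eps ->
      exists delta, 0 < delta /\ forall y, knorm (vsub y a) < r ->
        knorm (vsub y x) < delta -> forall k l, Rabs (D2g y k l - D2g x k l) < eps).

(* the kboundary of A is a C^2 submanifold of R^K of dimension |K|-1:
   locally a regular level set of a C^2 function *)
Definition C2_hypersurface_boundary (A : vec -> Prop) : Prop :=
  forall a, kboundary A a ->
    exists r g Dg D2g, 0 < r /\ C2_on_ball a r g Dg D2g /\
      (exists k, Dg a k <> 0) /\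
      (forall x, knorm (vsub x a) < r -> (kboundary A x <-> g x = 0)).

Definition grad_along (f : vec -> R) (x g : vec) : Prop :=
  forall eps, 0 < eps -> exists delta, 0 < delta /\
    forall s, ktangent s -> knorm s < delta ->
      Rabs (f (vadd x s) - f x - kdot g s) <= eps * knorm s.

Definition twice_diff_along (f : vec -> R) (x : vec) (H : K -> K -> R) : Prop :=
  exists r G, 0 < r /\
    (forall s, ktangent s -> knorm s < r -> grad_along f (vadd x s) (G (vadd x s))) /\
    (forall eps, 0 < eps -> exists delta, 0 < delta /\
      forall s, ktangent s -> knorm s < delta -> forall t, ktangent t ->
        Rabs (kdot (vsub (vsub (G (vadd x s)) (G x)) (mxv H s)) t)
          <= eps * knorm s * knorm t).

Definition pos_def_along (H : K -> K -> R) : Prop :=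
  forall s, ktangent s -> (exists k, s k <> 0) -> 0 < kdot s (mxv H s).

End FiniteDim.

(* An abstract expectation on a sample space Omega: a class L of
   "integrable" real random variables (a vector space containing constants)
   and a normalized, linear, monotone functional E on it.  Every probability
   space (Omega, F, P) gives one (L = integrable functions, E = expectation). *)
Record ExpSpace (Omega : Type) := {
  Lint : (Omega -> R) -> Prop;
  Ex : (Omega -> R) -> R;
  Lint_const : forall c, Lint (fun _ => c);
  Lint_add : forall f g, Lint f -> Lint g -> Lint (fun w => f w + g w);
  Lint_scale : forall c f, Lint f -> Lint (fun w => c * f w);
  Ex_add : forall f g, Lint f -> Lint g -> Ex (fun w => f w + g w) = Ex f + Ex g;
  Ex_scale : forall c f, Lint f -> Ex (fun w => c * f w) = c * Ex f;
  Ex_mono : forall f g, Lint f -> Lint g -> (forall w, f w <= g w) -> Ex f <= Ex g;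
  Ex_one : Ex (fun _ => 1) = 1
}.
Arguments Lint {Omega}.
Arguments Ex {Omega}.

(* Write f = v_A and let g be its gradient (along the simplex) at the prior p0.
   For q in the simplex put excess(q) = f q - f p0 - <g, q - p0>.  Since
   E[q] = p0, the linear term has mean zero, so VoI(q) = E[excess(q)], and it
   suffices to bound excess(q) between c|q - p0|^2 and C|q - p0|^2 pointwise.
   - Near p0: a second-order Taylor expansion (mean value theorem on segments)
     gives excess = (1/2) s'Hs + o(|s|^2), and a positive definite Hessian is
     coercive on tangent directions (minimum over the compact unit sphere).
   - Far from p0: f is convex (a maximum of linear functions), so excess grows
     at least linearly along rays from p0, giving the lower bound; f is bounded
     on the simplex, which has diameter sqrt 2, giving the upper bound. *)
From Pilot Require Import Defs.
From Stdlib Require Import Reals List ClassicalEpsilon.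
From Stdlib Require Import Lra Lia FunctionalExtensionality Classical.
Open Scope R_scope.

Section FiniteSums.
Variable K : Type.

Definition lsum (L : list K) (f : K -> R) : R := fold_right Rplus 0 (map f L).

Lemma lsum_plus L f g : lsum L (fun k => f k + g k) = lsum L f + lsum L g.
Proof. induction L; unfold lsum in *; simpl; [lra|]. rewrite IHL. lra. Qed.

Lemma lsum_scal L c f : lsum L (fun k => c * f k) = c * lsum L f.
Proof. induction L; unfold lsum in *; simpl; [lra|]. rewrite IHL. lra. Qed.

Lemma lsum_minus L f g : lsum L (fun k => f k - g k) = lsum L f - lsum L g.
Proof. induction L; unfold lsum in *; simpl; [lra|]. rewrite IHL. lra. Qed.

Lemma lsum_ext L f g : (forall k, f k = g k) -> lsum L f = lsum L g.
Proof. intro H; induction L; unfold lsum in *; simpl; [lra|]. rewrite IHL, H. lra. Qed.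

Lemma lsum_le L f g : (forall k, f k <= g k) -> lsum L f <= lsum L g.
Proof. intro H; induction L; unfold lsum in *; simpl; [lra|]. specialize (H a). lra. Qed.

Lemma lsum_zero L : lsum L (fun _ => 0) = 0.
Proof. induction L; unfold lsum in *; simpl; [lra|]. rewrite IHL. lra. Qed.

Lemma lsum_nonneg L f : (forall k, 0 <= f k) -> 0 <= lsum L f.
Proof. intro H. rewrite <- (lsum_zero L). apply lsum_le; auto. Qed.

Lemma lsum_abs L f : Rabs (lsum L f) <= lsum L (fun k => Rabs (f k)).
Proof.
  induction L; unfold lsum in *; simpl.
  - rewrite Rabs_R0; lra.
  - eapply Rle_trans; [apply Rabs_triang|]. lra.
Qed.

Lemma lsum_term L f k : (forall j, 0 <= f j) -> In k L -> f k <= lsum L f.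
Proof.
  intros H Hin; induction L; [destruct Hin|]. unfold lsum in *; simpl.
  destruct Hin as [->|Hin].
  - pose proof (lsum_nonneg L f H). unfold lsum in H0. lra.
  - specialize (IHL Hin). specialize (H a). lra.
Qed.

Lemma lsum_cv L (F : nat -> K -> R) (l : K -> R) :
  (forall k, In k L -> Un_cv (fun n => F n k) (l k)) ->
  Un_cv (fun n => lsum L (F n)) (lsum L l).
Proof.
  induction L; intro H; unfold lsum in *; simpl.
  - intros e he; exists 0%nat; intros; unfold R_dist; rewrite Rminus_diag, Rabs_R0; lra.
  - apply CV_plus; [apply H; simpl; auto|]. apply IHL; intros; apply H; simpl; auto.
Qed.

End FiniteSums.

Section RealSequences.

Definition strictly_incr (f : nat -> nat) : Prop := forall n, (f n < f (S n))%nat.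

Lemma cv_const c : Un_cv (fun _ => c) c.
Proof. intros e he; exists 0%nat; intros; unfold R_dist; rewrite Rminus_diag, Rabs_R0; lra. Qed.

Lemma strictly_incr_lt f : strictly_incr f -> forall n m, (n < m)%nat -> (f n < f m)%nat.
Proof. intros H n m Hnm. induction Hnm; [apply H|]. specialize (H m). lia. Qed.

Lemma strictly_incr_ge f : strictly_incr f -> forall n, (n <= f n)%nat.
Proof. intros H n; induction n; [lia|]. specialize (H n). lia. Qed.

Lemma strictly_incr_comp f g : strictly_incr f -> strictly_incr g -> strictly_incr (fun n => f (g n)).
Proof. intros Hf Hg n. apply (strictly_incr_lt f Hf), Hg. Qed.

Lemma cv_subseq (u : nat -> R) l f : strictly_incr f -> Un_cv u l -> Un_cv (fun n => u (f n)) l.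
Proof.
  intros Hf Hu e he. destruct (Hu e he) as [N HN]. exists N. intros n Hn.
  apply HN. pose proof (strictly_incr_ge f Hf n). lia.
Qed.

Lemma inv_succ_pos (n : nat) : 0 < / (INR n + 1).
Proof. apply Rinv_0_lt_compat. pose proof (pos_INR n). lra. Qed.

Lemma inv_succ_small eps : 0 < eps -> exists N : nat, forall n, (N <= n)%nat -> / (INR n + 1) < eps.
Proof.
  intro he. destruct (archimed_cor1 eps he) as [N [HN HN0]]. exists N. intros n Hn.
  assert (0 < INR N) by (apply lt_0_INR; lia).
  assert (INR N <= INR n) by (apply le_INR; exact Hn).
  eapply Rle_lt_trans; [|exact HN]. apply Rinv_le_contravar; lra.
Qed.

Lemma inv_succ_subseq_cv f : strictly_incr f -> Un_cv (fun n => / (INR (f n) + 1)) 0.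
Proof.
  intros Hf e he. destruct (inv_succ_small e he) as [N HN]. exists N. intros n Hn.
  unfold R_dist. rewrite Rminus_0_r, Rabs_right.
  - apply HN. pose proof (strictly_incr_ge f Hf n). lia.
  - apply Rle_ge, Rlt_le, inv_succ_pos.
Qed.

(* Diagonal choice of indices: if F N m is an index beyond N at accuracy 1/(m+1),
   then chain F picks, at step n, an index beyond the previous one at accuracy
   1/(n+1). *)
Fixpoint chain (F : nat -> nat -> nat) (n : nat) : nat :=
  match n with 0%nat => F 0%nat 0%nat | S n' => F (S (chain F n')) (S n') end.

Lemma subseq_of_adh (u : nat -> R) l : ValAdh u l ->
  exists f, strictly_incr f /\ Un_cv (fun n => u (f n)) l.
Proof.
  intro Hadh.
  assert (Hp : forall N m : nat, exists p, (N <= p)%nat /\ Rabs (u p - l) < / (INR m + 1)).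
  { intros N m. apply (Hadh (fun y => Rabs (y - l) < / (INR m + 1)) N).
    exists (mkposreal _ (inv_succ_pos m)). intros y Hy. exact Hy. }
  set (F := fun N m => proj1_sig (constructive_indefinite_description _ (Hp N m))).
  assert (HF : forall N m, (N <= F N m)%nat /\ Rabs (u (F N m) - l) < / (INR m + 1))
    by (intros N m; exact (proj2_sig (constructive_indefinite_description _ (Hp N m)))).
  exists (chain F). split.
  - intro n. simpl. destruct (HF (S (chain F n)) (S n)). lia.
  - assert (Hc : forall n, Rabs (u (chain F n) - l) < / (INR n + 1))
      by (intro n; destruct n; simpl; apply HF).
    intros e he. destruct (inv_succ_small e he) as [N HN]. exists N. intros n Hn.
    unfold R_dist. specialize (Hc n). specialize (HN n Hn). lra.
Qed.

End RealSequences.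
Section Euclid.
Variable K : Type.
Variable enumK : list K.
Hypothesis HfullK : forall k : K, In k enumK.

Notation vec := (vec K).
Notation kdot := (kdot K enumK).
Notation knorm := (knorm K enumK).
Notation vadd := (vadd K).
Notation vsub := (vsub K).
Notation vscale := (vscale K).
Notation mxv := (mxv K enumK).
Notation ktangent := (ktangent K enumK).
Notation ls := (lsum K enumK).

Lemma kdot_ls s v : kdot s v = ls (fun k => s k * v k). Proof. reflexivity. Qed.

Lemma kdot_ge0 s : 0 <= kdot s s.
Proof. rewrite kdot_ls. apply lsum_nonneg; intro; nra. Qed.

Lemma knorm_ge0 s : 0 <= knorm s.
Proof. apply sqrt_pos. Qed.

Lemma knorm_sq s : knorm s ^ 2 = kdot s s.
Proof. unfold Defs.knorm. rewrite pow2_sqrt; [reflexivity|apply kdot_ge0]. Qed.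

Lemma kdot_sym s v : kdot s v = kdot v s.
Proof. rewrite !kdot_ls. apply lsum_ext; intro; ring. Qed.

Lemma kdot_scale_l t s v : kdot (vscale t s) v = t * kdot s v.
Proof. rewrite !kdot_ls, <- lsum_scal. apply lsum_ext; intro; unfold Defs.vscale; ring. Qed.

Lemma kdot_scale_r t s v : kdot s (vscale t v) = t * kdot s v.
Proof. rewrite kdot_sym, kdot_scale_l, kdot_sym. reflexivity. Qed.

Lemma kdot_add_l a b v : kdot (vadd a b) v = kdot a v + kdot b v.
Proof. rewrite !kdot_ls, <- lsum_plus. apply lsum_ext; intro; unfold Defs.vadd; ring. Qed.

Lemma kdot_sub_l a b v : kdot (vsub a b) v = kdot a v - kdot b v.
Proof. rewrite !kdot_ls, <- lsum_minus. apply lsum_ext; intro; unfold Defs.vsub; ring. Qed.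

Lemma knorm_scale t s : knorm (vscale t s) = Rabs t * knorm s.
Proof.
  unfold Defs.knorm. rewrite kdot_scale_l, kdot_scale_r, <- Rmult_assoc.
  rewrite (sqrt_mult_alt (t * t)); [|nra]. rewrite <- sqrt_Rsqr_abs. reflexivity.
Qed.

Lemma mxv_scale (H : K -> K -> R) t s : mxv H (vscale t s) = vscale t (mxv H s).
Proof.
  apply functional_extensionality; intro k. unfold Defs.mxv, Defs.vscale.
  change (sumK K enumK) with ls. rewrite <- lsum_scal. apply lsum_ext; intro; ring.
Qed.

Lemma tangent_scale t s : ktangent s -> ktangent (vscale t s).
Proof.
  unfold Defs.ktangent, Defs.vscale. change (sumK K enumK) with ls.
  intro H. rewrite lsum_scal, H. ring.
Qed.

Lemma coord_le s k : Rabs (s k) <= knorm s.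
Proof.
  assert (H : s k * s k <= kdot s s).
  { rewrite kdot_ls. apply (lsum_term K enumK (fun k => s k * s k)); auto. intro; nra. }
  rewrite <- sqrt_Rsqr_abs. apply sqrt_le_1_alt. exact H.
Qed.

Lemma dot_bound g s B : (forall k, Rabs (s k) <= B) ->
  Rabs (kdot g s) <= ls (fun k => Rabs (g k)) * B.
Proof.
  intro HB. rewrite kdot_ls. eapply Rle_trans; [apply lsum_abs|].
  rewrite Rmult_comm, <- lsum_scal. apply lsum_le; intro k.
  rewrite Rabs_mult. specialize (HB k). pose proof (Rabs_pos (g k)). nra.
Qed.

Definition mx_l1 (H : K -> K -> R) : R := ls (fun k => ls (fun l => Rabs (H k l))).

Lemma mx_l1_ge0 H : 0 <= mx_l1 H.
Proof. apply lsum_nonneg; intro; apply lsum_nonneg; intro; apply Rabs_pos. Qed.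

Lemma quad_bound H s : Rabs (kdot s (mxv H s)) <= mx_l1 H * knorm s ^ 2.
Proof.
  rewrite kdot_sym. eapply Rle_trans; [apply (dot_bound _ s (knorm s)); intro; apply coord_le|].
  unfold mx_l1. replace (knorm s ^ 2) with (knorm s * knorm s) by ring.
  rewrite <- Rmult_assoc. apply Rmult_le_compat_r; [apply knorm_ge0|].
  rewrite Rmult_comm, <- lsum_scal. apply lsum_le; intro k.
  unfold Defs.mxv. change (sumK K enumK) with ls. eapply Rle_trans; [apply lsum_abs|].
  rewrite <- lsum_scal. apply lsum_le; intro l.
  rewrite Rabs_mult. pose proof (coord_le s l). pose proof (Rabs_pos (H k l)). nra.
Qed.

Definition cv_vec (x : nat -> vec) (y : vec) : Prop := forall k, Un_cv (fun n => x n k) (y k).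

Lemma cv_dot x z y w : cv_vec x y -> cv_vec z w ->
  Un_cv (fun n => kdot (x n) (z n)) (kdot y w).
Proof. intros Hx Hz. apply (lsum_cv K enumK (fun n k => x n k * z n k)). intros k _. apply CV_mult; auto. Qed.

Lemma cv_mxv H x y : cv_vec x y -> cv_vec (fun n => mxv H (x n)) (mxv H y).
Proof. intros Hx k. apply (lsum_cv K enumK (fun n l => H k l * x n l)). intros l _. apply CV_mult; [apply cv_const|auto]. Qed.

Lemma cv_sumK x y : cv_vec x y -> Un_cv (fun n => sumK K enumK (x n)) (sumK K enumK y).
Proof. intro Hx. apply (lsum_cv K enumK x). auto. Qed.

(* Bolzano-Weierstrass in R^K, by extracting successively along the coordinates. *)
Lemma bw_list (L : list K) (x : nat -> vec) M : (forall n k, Rabs (x n k) <= M) ->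
  exists f y, strictly_incr f /\ forall k, In k L -> Un_cv (fun n => x (f n) k) (y k).
Proof.
  intro HM. induction L as [|a L IH].
  - exists (fun n => n), (fun _ => 0). split; [intro; lia|intros k []].
  - destruct IH as [f [y [Hf Hy]]].
    destruct (Bolzano_Weierstrass (fun n => x (f n) a) (fun c => -M <= c <= M) (compact_P3 (-M) M))
      as [l Hl].
    { intro n. specialize (HM (f n) a). unfold Rabs in HM; destruct (Rcase_abs (x (f n) a)); lra. }
    destruct (subseq_of_adh _ _ Hl) as [g [Hg Hgl]].
    exists (fun n => f (g n)), (fun j => if excluded_middle_informative (j = a) then l else y j).
    split; [apply strictly_incr_comp; auto|].
    intros k Hk. destruct (excluded_middle_informative (k = a)) as [->|Hne]; [exact Hgl|].
    destruct Hk as [Hk|Hk]; [congruence|]. apply (cv_subseq (fun n => x (f n) k)); auto.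
Qed.

Lemma bw_vec (x : nat -> vec) M : (forall n k, Rabs (x n k) <= M) ->
  exists f y, strictly_incr f /\ cv_vec (fun n => x (f n)) y.
Proof. intro HM. destruct (bw_list enumK x M HM) as [f [y [Hf Hy]]]. exists f, y. split; [exact Hf|intro k; apply Hy, HfullK]. Qed.

Definition seq_closed (S : vec -> Prop) : Prop :=
  forall x y, (forall n, S (x n)) -> cv_vec x y -> S y.

Lemma max_attained (S : vec -> Prop) (phi : vec -> R) M B :
  (exists x, S x) -> (forall x, S x -> forall k, Rabs (x k) <= M) -> seq_closed S ->
  (forall x y, cv_vec x y -> Un_cv (fun n => phi (x n)) (phi y)) ->
  (forall x, S x -> phi x <= B) ->
  exists y, S y /\ forall x, S x -> phi x <= phi y.
Proof.
  intros [x0 Hx0] HM Hcl Hphi HB.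
  set (E := fun r => exists x, S x /\ r = phi x).
  assert (HbE : bound E) by (exists B; intros r [x [Hx ->]]; auto).
  destruct (completeness E HbE (ex_intro _ (phi x0) (ex_intro _ x0 (conj Hx0 eq_refl))))
    as [sup [Hsup Hleast]].
  assert (Happrox : forall n : nat, exists x, S x /\ sup - / (INR n + 1) < phi x).
  { intro n. apply NNPP. intro Hno.
    assert (Hub : is_upper_bound E (sup - / (INR n + 1))).
    { intros r [x [Hx ->]]. apply Rnot_lt_le. intro Hlt. apply Hno. exists x; auto. }
    specialize (Hleast _ Hub). pose proof (inv_succ_pos n). lra. }
  set (x := fun n => proj1_sig (constructive_indefinite_description _ (Happrox n))).
  assert (Hx : forall n, S (x n) /\ sup - / (INR n + 1) < phi (x n))
    by (intro n; exact (proj2_sig (constructive_indefinite_description _ (Happrox n)))).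
  destruct (bw_vec x M) as [f [y [Hf Hy]]]; [intros n; apply HM, Hx|].
  assert (HSy : S y) by (apply (Hcl (fun n => x (f n))); auto; intro; apply Hx).
  assert (Hcv := Hphi _ _ Hy).
  assert (Hphiy : phi y = sup).
  { apply Rle_antisym.
    - apply (@Rle_cv_lim (fun n => phi (x (f n))) (fun _ => sup) (phi y) sup); [|exact Hcv|apply cv_const].
      intro n. apply Hsup. exists (x (f n)). split; auto. apply Hx.
    - apply (@Rle_cv_lim (fun n => sup - / (INR (f n) + 1)) (fun n => phi (x (f n))) sup (phi y));
        [intro n; left; apply Hx| |exact Hcv].
      pose proof (CV_minus _ _ _ _ (cv_const sup) (inv_succ_subseq_cv f Hf)) as Hc.
      rewrite Rminus_0_r in Hc. exact Hc. }
  exists y. split; auto. intros z Hz. rewrite Hphiy. apply Hsup. exists z; auto.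
Qed.

End Euclid.
Section Compactness.
Variable K : Type.
Variable enumK : list K.
Hypothesis HfullK : forall k : K, In k enumK.

Notation kdot := (kdot K enumK).
Notation knorm := (knorm K enumK).
Notation vsub := (vsub K).
Notation vscale := (vscale K).
Notation mxv := (mxv K enumK).
Notation ktangent := (ktangent K enumK).
Notation ls := (lsum K enumK).

Lemma kdot_self_eq0 s : (forall k, s k = 0) -> kdot s s = 0.
Proof. intro H. rewrite kdot_ls, <- (lsum_zero K enumK). apply lsum_ext. intro k. rewrite H. ring. Qed.

Lemma kclosed_seq_closed A : kclosed K enumK A -> seq_closed K A.
Proof.
  intros Hcl x y Hx Hy. apply Hcl. intros eps he.
  assert (Hd : Un_cv (fun n => kdot (vsub y (x n)) (vsub y (x n))) (kdot (vsub y y) (vsub y y))).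
  { assert (Hk : cv_vec K (fun n => vsub y (x n)) (vsub y y))
      by (intro k; apply CV_minus; [apply cv_const|apply Hy]).
    apply cv_dot; auto. }
  rewrite kdot_self_eq0 in Hd by (intro; unfold Defs.vsub; ring).
  destruct (Hd (eps * eps)) as [N HN]; [nra|].
  exists (x N). split; auto. specialize (HN N (Nat.le_refl N)).
  unfold R_dist in HN. rewrite Rminus_0_r, Rabs_right in HN by (apply Rle_ge, kdot_ge0).
  unfold Defs.knorm. rewrite <- (sqrt_square eps) by lra.
  apply sqrt_lt_1_alt. split; [apply kdot_ge0|exact HN].
Qed.

Lemma value_attained A : knonempty K A -> kcompact K enumK A ->
  forall p, exists v, is_max_value K enumK A p v.
Proof.
  intros HAne [Hcl [M HM]] p.
  destruct (max_attained K enumK HfullK A (kdot p) M (ls (fun k => Rabs (p k)) * M))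
    as [y [Hy Hmax]]; auto.
  - intros a Ha k. eapply Rle_trans; [apply coord_le; auto|]. auto.
  - apply kclosed_seq_closed; auto.
  - intros x z Hx. apply cv_dot; auto. intro; apply cv_const.
  - intros a Ha. eapply Rle_trans; [apply Rle_abs|]. apply dot_bound.
    intro k. eapply Rle_trans; [apply coord_le; auto|]. auto.
  - exists (kdot p y). split; [exists y; auto|exact Hmax].
Qed.

Lemma quad_normalize H s : 0 < knorm s ->
  let u := vscale (/ knorm s) s in
  kdot u u = 1 /\ kdot u (mxv H u) * knorm s ^ 2 = kdot s (mxv H s).
Proof.
  intros Hs u. unfold u. rewrite mxv_scale, !kdot_scale_l, !kdot_scale_r, <- knorm_sq.
  split; field; lra.
Qed.

Lemma quad_null H s : knorm s = 0 -> kdot s (mxv H s) = 0.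
Proof.
  intro Hs. pose proof (quad_bound K enumK HfullK H s) as Hb. rewrite Hs in Hb.
  replace (mx_l1 K enumK H * 0 ^ 2) with 0 in Hb by ring.
  pose proof (Rle_abs (kdot s (mxv H s))). pose proof (Rle_abs (- kdot s (mxv H s))).
  rewrite Rabs_Ropp in H1. lra.
Qed.

(* Coercivity: minimize the form over the compact unit sphere of tangent
   directions; positive definiteness makes the minimum positive. *)
Lemma pos_def_coercive H : pos_def_along K enumK H ->
  exists lam, 0 < lam /\ forall s, ktangent s -> lam * knorm s ^ 2 <= kdot s (mxv H s).
Proof.
  intro Hpd.
  set (S := fun u => ktangent u /\ kdot u u = 1).
  assert (Hunit : forall s, ktangent s -> 0 < knorm s -> S (vscale (/ knorm s) s)).
  { intros s Hs Hn. split; [apply tangent_scale; auto|apply (quad_normalize H s Hn)]. }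
  destruct (classic (exists u, S u)) as [Hne|Hempty].
  2:{ exists 1. split; [lra|]. intros s Hs.
      destruct (Rle_lt_or_eq_dec 0 (knorm s) (knorm_ge0 K enumK s)) as [Hn|Hn].
      - exfalso. apply Hempty. eexists. apply Hunit; eauto.
      - rewrite (quad_null H s) by (symmetry; exact Hn). rewrite <- Hn. lra. }
  destruct (max_attained K enumK HfullK S (fun u => - kdot u (mxv H u)) 1 (mx_l1 K enumK H))
    as [y [[Hyt Hyn] Hmin]]; auto.
  - intros u [_ Hu] k. eapply Rle_trans; [apply coord_le; auto|].
    unfold Defs.knorm. rewrite Hu, sqrt_1. lra.
  - intros x y Hx Hy. split.
    + apply (UL_sequence (fun n => sumK K enumK (x n))); [apply cv_sumK; auto|].
      intros e he. exists 0%nat. intros n _. unfold R_dist.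
      rewrite (proj1 (Hx n)), Rminus_diag, Rabs_R0. lra.
    + apply (UL_sequence (fun n => kdot (x n) (x n))); [apply cv_dot; auto|].
      intros e he. exists 0%nat. intros n _. unfold R_dist.
      rewrite (proj2 (Hx n)), Rminus_diag, Rabs_R0. lra.
  - intros x y Hx. apply (CV_opp (fun n => kdot (x n) (mxv H (x n)))).
    apply cv_dot; [|apply cv_mxv]; auto.
  - intros u [_ Hu]. pose proof (quad_bound K enumK HfullK H u) as Hb.
    rewrite knorm_sq, Hu in Hb. pose proof (Rle_abs (- kdot u (mxv H u))).
    rewrite Rabs_Ropp in H0. lra.
  - exists (kdot y (mxv H y)). split.
    + apply Hpd; auto. apply NNPP. intro Hz.
      rewrite kdot_self_eq0 in Hyn; [lra|]. intro k. apply NNPP. intro Hk. apply Hz. eauto.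
    + intros s Hs.
      destruct (Rle_lt_or_eq_dec 0 (knorm s) (knorm_ge0 K enumK s)) as [Hn|Hn].
      * destruct (quad_normalize H s Hn) as [_ Hq]. rewrite <- Hq.
        specialize (Hmin _ (Hunit s Hs Hn)). apply Rmult_le_compat_r; [nra|lra].
      * rewrite (quad_null H s) by (symmetry; exact Hn). rewrite <- Hn. ring_simplify. lra.
Qed.

End Compactness.
(* Second-order Taylor expansion along the simplex, derived from the definition
   of [twice_diff_along] by the mean value theorem on segments. *)
Section Taylor.
Variable K : Type.
Variable enumK : list K.

Notation vec := (vec K).
Notation kdot := (kdot K enumK).
Notation knorm := (knorm K enumK).
Notation vadd := (vadd K).
Notation vscale := (vscale K).
Notation mxv := (mxv K enumK).
Notation ktangent := (ktangent K enumK).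

Definition excess (f : vec -> R) (x g s : vec) : R := f (vadd x s) - f x - kdot g s.

Lemma vadd_scale0 x s : vadd x (vscale 0 s) = x.
Proof. apply functional_extensionality; intro k; unfold Defs.vadd, Defs.vscale; ring. Qed.

Lemma vadd_scale_shift x s t h : vadd (vadd x (vscale t s)) (vscale h s) = vadd x (vscale (t + h) s).
Proof. apply functional_extensionality; intro k; unfold Defs.vadd, Defs.vscale; ring. Qed.

Lemma deriv_quad a Q c : derivable_pt_lim (fun t => a * t + Q / 2 * (t * t)) c (a + Q * c).
Proof.
  assert (Hsq : derivable_pt_lim (fun t => t * t) c (1 * id c + id c * 1))
    by exact (derivable_pt_lim_mult id id c 1 1 (derivable_pt_lim_id c) (derivable_pt_lim_id c)).
  replace (a + Q * c) with (a * 1 + Q / 2 * (1 * id c + id c * 1)) by (unfold id; field).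
  exact (derivable_pt_lim_plus _ _ c _ _
           (derivable_pt_lim_scal id a c 1 (derivable_pt_lim_id c))
           (derivable_pt_lim_scal (fun t => t * t) (Q / 2) c _ Hsq)).
Qed.

Lemma grad_along_line f x s g : ktangent s -> grad_along K enumK f x g ->
  derivable_pt_lim (fun h => f (vadd x (vscale h s))) 0 (kdot g s).
Proof.
  intros Hs Hg e he. set (n := knorm s). assert (hn : 0 <= n) by apply knorm_ge0.
  destruct (Hg (e / (2 * (n + 1)))) as [d [Hd Hd']]; [apply Rdiv_lt_0_compat; lra|].
  assert (hdd : 0 < d / (n + 1)) by (apply Rdiv_lt_0_compat; lra).
  exists (mkposreal _ hdd). simpl. intros h Hh Hhd.
  rewrite vadd_scale0, Rplus_0_l.
  assert (Hsn : knorm (vscale h s) < d).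
  { rewrite knorm_scale. fold n. apply (Rmult_lt_compat_r (n + 1)) in Hhd; [|lra].
    unfold Rdiv in Hhd. rewrite Rmult_assoc, Rinv_l in Hhd by lra. pose proof (Rabs_pos h). nra. }
  specialize (Hd' _ (tangent_scale K enumK h s Hs) Hsn).
  rewrite kdot_scale_r, knorm_scale in Hd'. fold n in Hd'.
  replace ((f (vadd x (vscale h s)) - f x) / h - kdot g s)
    with ((f (vadd x (vscale h s)) - f x - h * kdot g s) / h) by (field; auto).
  unfold Rdiv. rewrite Rabs_mult, Rabs_inv.
  assert (Hh0 : 0 < Rabs h) by (apply Rabs_pos_lt; auto).
  apply (Rmult_lt_reg_r (Rabs h)); auto. rewrite Rmult_assoc, Rinv_l, Rmult_1_r by lra.
  eapply Rle_lt_trans; [exact Hd'|].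
  assert (n < 2 * (n + 1)) by lra.
  assert (e * / (2 * (n + 1)) * n < e)
    by (apply (Rmult_lt_reg_r (2 * (n + 1))); [lra|]; field_simplify; nra).
  nra.
Qed.

Lemma taylor_second_order f x H : twice_diff_along K enumK f x H ->
  exists g : vec, forall eps, 0 < eps -> exists delta, 0 < delta /\
    forall s, ktangent s -> knorm s < delta ->
      Rabs (excess f x g s - / 2 * kdot s (mxv H s)) <= eps * knorm s ^ 2.
Proof.
  intros [r [G [Hr [Hgrad Hder]]]]. exists (G x). intros eps he.
  destruct (Hder eps he) as [d1 [Hd1 Hd1']].
  exists (Rmin (r / 2) d1). split; [apply Rmin_pos; lra|].
  intros s Hs Hsn.
  assert (Hsr : knorm s < r / 2) by (eapply Rlt_le_trans; [exact Hsn|apply Rmin_l]).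
  assert (Hsd : knorm s < d1) by (eapply Rlt_le_trans; [exact Hsn|apply Rmin_r]).
  pose proof (knorm_ge0 K enumK s) as Hs0.
  set (Q := kdot s (mxv H s)). set (a := kdot (G x) s).
  (* g restricts f to the segment, phi removes its second-order model *)
  set (g := fun t => f (vadd x (vscale t s))).
  set (phi := fun t => g t - (a * t + Q / 2 * (t * t))).
  set (phi' := fun t => kdot (G (vadd x (vscale t s))) s - (a + Q * t)).
  assert (Hg : forall t, 0 <= t <= 1 -> derivable_pt_lim g t (kdot (G (vadd x (vscale t s))) s)).
  { intros t Ht. set (y := vadd x (vscale t s)).
    assert (Hty : knorm (vscale t s) < r)
      by (rewrite knorm_scale, Rabs_right by lra; nra).
    pose proof (grad_along_line f y s _ Hs (Hgrad _ (tangent_scale K enumK t s Hs) Hty)) as D.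
    intros e he'. destruct (D e he') as [dl Hdl]. exists dl. intros h Hh Hhl.
    specialize (Hdl h Hh Hhl). unfold g. rewrite <- vadd_scale_shift.
    fold y. rewrite vadd_scale0, Rplus_0_l in Hdl. exact Hdl. }
  assert (Hphi : forall c, 0 <= c <= 1 -> derivable_pt_lim phi c (phi' c))
    by (intros c Hc; exact (derivable_pt_lim_minus _ _ _ _ _ (Hg c Hc) (deriv_quad a Q c))).
  destruct (MVT_cor2 phi phi' 0 1 Rlt_0_1 Hphi) as [c [Hc Hc01]].
  assert (Hexc : excess f x (G x) s - / 2 * Q = phi' c).
  { replace (phi' c) with (phi 1 - phi 0) by (rewrite Hc; ring).
    unfold phi, g, excess. rewrite vadd_scale0.
    replace (vscale 1 s) with s by (apply functional_extensionality; intro; unfold Defs.vscale; ring).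
    fold a. field. }
  rewrite Hexc. unfold phi'.
  assert (Hcs : knorm (vscale c s) < d1) by (rewrite knorm_scale, Rabs_right by lra; nra).
  specialize (Hd1' _ (tangent_scale K enumK c s Hs) Hcs s Hs).
  rewrite !kdot_sub_l, mxv_scale, kdot_scale_l, (kdot_sym _ _ (mxv H s)) in Hd1'.
  fold Q a in Hd1'. rewrite knorm_scale, (Rabs_right c) in Hd1' by lra.
  replace (kdot (G (vadd x (vscale c s))) s - (a + Q * c))
    with (kdot (G (vadd x (vscale c s))) s - a - c * Q) by ring.
  eapply Rle_trans; [exact Hd1'|].
  assert (0 <= eps * (knorm s * knorm s)) by (apply Rmult_le_pos; nra).
  nra.
Qed.

End Taylor.
Section ValueFunction.
Variable K : Type.
Variable enumK : list K.
Hypothesis HfullK : forall k : K, In k enumK.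

Notation vec := (vec K).
Notation knorm := (knorm K enumK).
Notation vadd := (vadd K).
Notation vsub := (vsub K).
Notation vscale := (vscale K).
Notation in_simplex := (in_simplex K enumK).
Notation ls := (lsum K enumK).

Lemma simplex_coord q k : in_simplex q -> 0 <= q k <= 1.
Proof. intros [H0 H1]. split; auto. rewrite <- H1. apply (lsum_term K enumK q k); auto. Qed.

Lemma simplex_tangent q p : in_simplex q -> in_simplex p -> ktangent K enumK (vsub q p).
Proof.
  intros [_ Hq] [_ Hp]. unfold Defs.ktangent, Defs.vsub. change (sumK K enumK) with ls in *.
  rewrite lsum_minus, Hq, Hp. ring.
Qed.

Lemma simplex_dist q p : in_simplex q -> in_simplex p -> knorm (vsub q p) ^ 2 <= 2.
Proof.
  intros Hq Hp. rewrite knorm_sq, kdot_ls.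
  apply Rle_trans with (ls (fun k => q k + p k)).
  - apply lsum_le. intro k. unfold Defs.vsub.
    pose proof (simplex_coord q k Hq). pose proof (simplex_coord p k Hp). nra.
  - rewrite lsum_plus. destruct Hq as [_ Hq1]. destruct Hp as [_ Hp1].
    change (sumK K enumK) with ls in *. lra.
Qed.

Definition convex_fun (f : vec -> R) : Prop :=
  forall x y t, 0 <= t <= 1 -> f (vadd (vscale (1 - t) x) (vscale t y)) <= (1 - t) * f x + t * f y.

Lemma vA_is_max A : knonempty K A -> kcompact K enumK A ->
  forall p, is_max_value K enumK A p (vA K enumK A p).
Proof. intros Hne Hcpt p. unfold vA. apply epsilon_spec, value_attained; auto. Qed.

(* A maximum of linear functionals is convex. *)
Lemma vA_convex A : (forall p, is_max_value K enumK A p (vA K enumK A p)) ->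
  convex_fun (vA K enumK A).
Proof.
  intros Hm x y t Ht.
  destruct (Hm (vadd (vscale (1 - t) x) (vscale t y))) as [[a [Ha Hv]] _].
  rewrite <- Hv, kdot_add_l, !kdot_scale_l.
  destruct (Hm x) as [_ Hx]. destruct (Hm y) as [_ Hy].
  specialize (Hx a Ha). specialize (Hy a Ha). nra.
Qed.

Lemma vA_bound A M : (forall p, is_max_value K enumK A p (vA K enumK A p)) ->
  (forall a, A a -> knorm a <= M) ->
  forall q, in_simplex q -> Rabs (vA K enumK A q) <= Rabs M.
Proof.
  intros Hm HM q Hq. destruct (Hm q) as [[a [Ha Hv]] _]. rewrite <- Hv.
  eapply Rle_trans; [apply (dot_bound K enumK q a (Rabs M))|].
  - intro k. eapply Rle_trans; [apply coord_le; auto|].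
    eapply Rle_trans; [apply HM; auto|apply Rle_abs].
  - replace (ls (fun k => Rabs (q k))) with 1; [lra|].
    destruct Hq as [Hq0 Hq1]. rewrite <- Hq1. apply lsum_ext. intro k.
    rewrite Rabs_right; auto. apply Rle_ge; auto.
Qed.

End ValueFunction.
Section QuadraticGrowth.
Variable K : Type.
Variable enumK : list K.
Hypothesis HfullK : forall k : K, In k enumK.

Notation kdot := (kdot K enumK).
Notation knorm := (knorm K enumK).
Notation vadd := (vadd K).
Notation vsub := (vsub K).
Notation vscale := (vscale K).
Notation ktangent := (ktangent K enumK).
Notation in_simplex := (in_simplex K enumK).
Notation excess := (excess K enumK).
Notation ls := (lsum K enumK).

Lemma local_quadratic_bounds f x H :
  twice_diff_along K enumK f x H -> pos_def_along K enumK H ->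
  exists g m Mq d, 0 < m /\ 0 < Mq /\ 0 < d /\ forall s, ktangent s -> knorm s < d ->
    m * knorm s ^ 2 <= excess f x g s <= Mq * knorm s ^ 2.
Proof.
  intros Htd Hpd.
  destruct (taylor_second_order K enumK f x H Htd) as [g Htay].
  destruct (pos_def_coercive K enumK HfullK H Hpd) as [lam [Hlam Hcoer]].
  destruct (Htay (lam / 4)) as [d [Hd Hloc]]; [lra|].
  pose proof (mx_l1_ge0 K enumK H) as HCH.
  exists g, (lam / 4), (mx_l1 K enumK H / 2 + lam / 4), d.
  split; [lra|]. split; [lra|]. split; [exact Hd|].
  intros s Hs Hsn. specialize (Hloc s Hs Hsn). specialize (Hcoer s Hs).
  pose proof (quad_bound K enumK HfullK H s) as Hq.
  pose proof (Rle_abs (kdot s (Defs.mxv K enumK H s))).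
  pose proof (Rle_abs (excess f x g s - / 2 * kdot s (Defs.mxv K enumK H s))).
  pose proof (Rle_abs (- (excess f x g s - / 2 * kdot s (Defs.mxv K enumK H s)))).
  rewrite Rabs_Ropp in H2. split; nra.
Qed.

Lemma excess_scale f x g s t : convex_fun K f -> 0 <= t <= 1 ->
  excess f x g (vscale t s) <= t * excess f x g s.
Proof.
  intros Hconv Ht. unfold excess.
  replace (vadd x (vscale t s)) with (vadd (vscale (1 - t) x) (vscale t (vadd x s)))
    by (apply functional_extensionality; intro k; unfold Defs.vadd, Defs.vscale; ring).
  rewrite kdot_scale_r. pose proof (Hconv x (vadd x s) t Ht). nra.
Qed.

Lemma excess_far_lower f x g m d : convex_fun K f -> 0 < d ->
  (forall s, ktangent s -> knorm s < d -> m * knorm s ^ 2 <= excess f x g s) ->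
  forall s, ktangent s -> d <= knorm s -> m * d / 2 * knorm s <= excess f x g s.
Proof.
  intros Hconv Hd Hloc s Hs Hsd. set (n := knorm s) in *.
  set (t := d / 2 / n).
  assert (Htn : t * n = d / 2) by (unfold t; field; lra).
  assert (Ht : 0 <= t <= 1).
  { split; [left; apply Rdiv_lt_0_compat; lra|].
    apply (Rmult_le_reg_r n); [lra|]. rewrite Htn. lra. }
  assert (Hnt : knorm (vscale t s) = d / 2) by (rewrite knorm_scale, Rabs_right by lra; exact Htn).
  pose proof (Hloc _ (tangent_scale K enumK t s Hs) ltac:(lra)) as Hnear.
  pose proof (excess_scale f x g s t Hconv Ht) as Hray. rewrite Hnt in Hnear.
  assert (Hn : m * (d / 2) ^ 2 * n <= t * excess f x g s * n)
    by (apply Rmult_le_compat_r; lra).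
  replace (t * excess f x g s * n) with (t * n * excess f x g s) in Hn by ring.
  rewrite Htn in Hn. apply (Rmult_le_reg_l (d / 2)); [lra|].
  eapply Rle_trans; [|exact Hn]. apply Req_le. field.
Qed.

Lemma excess_quadratic_on_simplex f p0 g m Mq d Mb :
  0 < m -> 0 < Mq -> 0 < d -> in_simplex p0 -> convex_fun K f ->
  (forall q, in_simplex q -> Rabs (f q) <= Mb) ->
  (forall s, ktangent s -> knorm s < d ->
     m * knorm s ^ 2 <= excess f p0 g s <= Mq * knorm s ^ 2) ->
  exists C c, 0 < C /\ 0 < c /\ forall q, in_simplex q ->
    c * knorm (vsub q p0) ^ 2 <= excess f p0 g (vsub q p0) <= C * knorm (vsub q p0) ^ 2.
Proof.
  intros Hm HMq Hd Hp0 Hconv Hbd Hloc.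
  set (B := 2 * Mb + ls (fun k => Rabs (g k))).
  assert (HB : 0 <= B).
  { pose proof (Hbd p0 Hp0). pose proof (Rabs_pos (f p0)).
    pose proof (lsum_nonneg K enumK (fun k => Rabs (g k)) (fun k => Rabs_pos (g k))).
    unfold B. lra. }
  assert (HBd : 0 <= B / (d * d))
    by (unfold Rdiv; apply Rmult_le_pos; [lra|left; apply Rinv_0_lt_compat; nra]).
  exists (Mq + B / (d * d)), (Rmin m (m * d / 4)).
  split; [lra|]. split; [apply Rmin_pos; nra|].
  intros q Hq. set (s := vsub q p0).
  assert (Hs : ktangent s) by (apply simplex_tangent; auto).
  set (n := knorm s). assert (hn : 0 <= n) by apply knorm_ge0.
  assert (hn2 : n ^ 2 <= 2) by (apply simplex_dist; auto).
  pose proof (Rmin_l m (m * d / 4)). pose proof (Rmin_r m (m * d / 4)).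
  destruct (Rlt_le_dec n d) as [Hnear|Hfar].
  - specialize (Hloc s Hs Hnear). fold n in Hloc. split; nra.
  - split.
    + pose proof (excess_far_lower f p0 g m d Hconv Hd
                    (fun u Hu Hun => proj1 (Hloc u Hu Hun)) s Hs Hfar) as Hgrow.
      fold n in Hgrow. assert (n <= 2) by nra.
      assert (Rmin m (m * d / 4) * n ^ 2 <= m * d / 4 * n ^ 2) by (apply Rmult_le_compat_r; nra).
      assert (0 < m * d) by (apply Rmult_lt_0_compat; lra).
      assert (0 <= m * d / 4 * n) by (apply Rmult_le_pos; lra).
      assert (0 <= m * d / 4 * n * (2 - n)) by (apply Rmult_le_pos; lra).
      nra.
    + assert (Hup : excess f p0 g s <= B).
      { unfold excess, B. replace (vadd p0 s) with q
          by (apply functional_extensionality; intro k; unfold s, Defs.vadd, Defs.vsub; ring).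
        assert (Hlin : Rabs (kdot g s) <= ls (fun k => Rabs (g k)) * 1).
        { apply dot_bound. intro k. unfold s, Defs.vsub.
          pose proof (simplex_coord K enumK HfullK q k Hq).
          pose proof (simplex_coord K enumK HfullK p0 k Hp0). apply Rabs_le. lra. }
        pose proof (Hbd q Hq). pose proof (Hbd p0 Hp0).
        pose proof (Rle_abs (f q)). pose proof (Rle_abs (- f p0)) as Hp.
        pose proof (Rle_abs (- kdot g s)) as Hg. rewrite Rabs_Ropp in Hp, Hg. lra. }
      assert (B <= B / (d * d) * n ^ 2).
      { replace B with (B / (d * d) * (d * d)) at 1 by (field; lra).
        apply Rmult_le_compat_l; nra. }
      nra.
Qed.

End QuadraticGrowth.
Section Expectation.
Variable Omega : Type.
Variable P : ExpSpace Omega.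

Lemma Ex_ext f g : (forall w, f w = g w) -> Ex P f = Ex P g.
Proof. intro H. f_equal. apply functional_extensionality; auto. Qed.

Lemma Ex_const c : Ex P (fun _ => c) = c.
Proof.
  rewrite (Ex_ext (fun _ => c) (fun _ => c * 1)) by (intro; ring).
  rewrite (Ex_scale _ P c (fun _ => 1)) by apply Lint_const. rewrite Ex_one. ring.
Qed.

Lemma Lint_sub f g : Lint P f -> Lint P g -> Lint P (fun w => f w - g w).
Proof.
  intros Hf Hg. replace (fun w => f w - g w) with (fun w => f w + -1 * g w)
    by (apply functional_extensionality; intro; ring).
  apply Lint_add, Lint_scale; auto.
Qed.

Lemma Ex_sub f g : Lint P f -> Lint P g -> Ex P (fun w => f w - g w) = Ex P f - Ex P g.
Proof.
  intros Hf Hg. rewrite (Ex_ext _ (fun w => f w + -1 * g w)) by (intro; ring).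
  rewrite Ex_add, Ex_scale; auto; [ring|]. apply Lint_scale; auto.
Qed.

Lemma Ex_lsum (K : Type) (L : list K) (F : Omega -> K -> R) :
  (forall k, Lint P (fun w => F w k)) ->
  Lint P (fun w => lsum K L (F w)) /\
  Ex P (fun w => lsum K L (F w)) = lsum K L (fun k => Ex P (fun w => F w k)).
Proof.
  intro HF. induction L as [|a L [IH1 IH2]].
  - split; [apply (Lint_const _ P 0)|apply (Ex_const 0)].
  - split; [apply (Lint_add _ P (fun w => F w a) (fun w => lsum K L (F w))); auto|].
    change (Ex P (fun w => F w a + lsum K L (F w))
            = Ex P (fun w => F w a) + lsum K L (fun k => Ex P (fun w => F w k))).
    rewrite Ex_add, IH2; auto.
Qed.

Lemma Ex_centered_linear (K : Type) (enumK : list K) (q : Omega -> vec K) (p0 g : vec K) :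
  (forall k, Lint P (fun w => q w k)) -> (forall k, Ex P (fun w => q w k) = p0 k) ->
  Lint P (fun w => kdot K enumK g (vsub K (q w) p0)) /\
  Ex P (fun w => kdot K enumK g (vsub K (q w) p0)) = 0.
Proof.
  intros Hq HEq.
  assert (Hk : forall k, Lint P (fun w => g k * (q w k - p0 k)))
    by (intro k; apply Lint_scale, Lint_sub; [|apply Lint_const]; auto).
  destruct (Ex_lsum K enumK (fun w k => g k * (q w k - p0 k)) Hk) as [HL HE].
  split; [exact HL|]. change (Ex P (fun w => lsum K enumK (fun k => g k * (q w k - p0 k))) = 0).
  rewrite HE, <- (lsum_zero K enumK). apply lsum_ext. intro k.
  rewrite Ex_scale, Ex_sub, Ex_const, HEq; [ring|auto|apply Lint_const|].
  apply Lint_sub; [|apply Lint_const]; auto.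
Qed.

Lemma Ex_sandwich (h r : Omega -> R) c C : Lint P h -> Lint P r ->
  (forall w, c * r w <= h w <= C * r w) -> c * Ex P r <= Ex P h <= C * Ex P r.
Proof.
  intros Hh Hr Hb. rewrite <- !Ex_scale by auto.
  split; apply Ex_mono; auto; try apply Lint_scale; auto; apply Hb.
Qed.

End Expectation.

Lemma voi_bounds (K : Type) (enumK : list K) (f : vec K -> R) (p0 g : vec K) C c :
  (forall q, in_simplex K enumK q ->
     c * knorm K enumK (vsub K q p0) ^ 2 <= excess K enumK f p0 g (vsub K q p0)
       <= C * knorm K enumK (vsub K q p0) ^ 2) ->
  forall (Omega : Type) (P : ExpSpace Omega) (q : Omega -> vec K),
    (forall w, in_simplex K enumK (q w)) ->
    (forall k, Lint P (fun w => q w k)) ->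
    (forall k, Ex P (fun w => q w k) = p0 k) ->
    Lint P (fun w => f (q w)) ->
    Lint P (fun w => knorm K enumK (vsub K (q w) p0) ^ 2) ->
    C * Ex P (fun w => knorm K enumK (vsub K (q w) p0) ^ 2) >= Ex P (fun w => f (q w)) - f p0 /\
    Ex P (fun w => f (q w)) - f p0 >= c * Ex P (fun w => knorm K enumK (vsub K (q w) p0) ^ 2).
Proof.
  intros Hpt Omega P q Hqs Hqk Hqe HLf Hr2.
  destruct (Ex_centered_linear Omega P K enumK q p0 g Hqk Hqe) as [HLlin HElin].
  set (h := fun w => f (q w) - f p0 - kdot K enumK g (vsub K (q w) p0)).
  assert (HLh : Lint P h) by (apply Lint_sub; auto; apply Lint_sub; auto; apply Lint_const).
  assert (HEh : Ex P h = Ex P (fun w => f (q w)) - f p0).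
  { unfold h. rewrite Ex_sub, Ex_sub, Ex_const, HElin; auto; [ring|apply Lint_const|].
    apply Lint_sub; auto. apply Lint_const. }
  assert (Hb : forall w, c * knorm K enumK (vsub K (q w) p0) ^ 2 <= h w
                         <= C * knorm K enumK (vsub K (q w) p0) ^ 2).
  { intro w. specialize (Hpt (q w) (Hqs w)). unfold excess in Hpt. unfold h.
    replace (vadd K p0 (vsub K (q w) p0)) with (q w) in Hpt
      by (apply functional_extensionality; intro k; unfold Defs.vadd, Defs.vsub; ring).
    exact Hpt. }
  destruct (Ex_sandwich Omega P h _ c C HLh Hr2 Hb). rewrite <- HEh. split; lra.
Qed.

Theorem theorem3p6 (K : Type) (enumK : list K)
  (HnodupK : NoDup enumK) (HfullK : forall k : K, In k enumK)
  (A : vec K -> Prop) (p0 : vec K)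
  (HAne : knonempty K A) (HAcpt : kcompact K enumK A) (HAcvx : kconvex K A)
  (Hp0 : in_simplex K enumK p0) (Hp0full : full_support K p0)
  (HbdA : C2_hypersurface_boundary K enumK A)
  (Hflex : exists H : K -> K -> R,
      twice_diff_along K enumK (vA K enumK A) p0 H /\ pos_def_along K enumK H) :
  exists C c : R, 0 < C /\ 0 < c /\
    forall (Omega : Type) (P : ExpSpace Omega) (q : Omega -> vec K),
      (forall w, in_simplex K enumK (q w)) ->
      (forall k, Lint P (fun w => q w k)) ->
      (forall k, Ex P (fun w => q w k) = p0 k) ->
      Lint P (fun w => vA K enumK A (q w)) ->
      Lint P (fun w => knorm K enumK (vsub K (q w) p0) ^ 2) ->
      C * Ex P (fun w => knorm K enumK (vsub K (q w) p0) ^ 2)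
        >= Ex P (fun w => vA K enumK A (q w)) - vA K enumK A p0 /\
      Ex P (fun w => vA K enumK A (q w)) - vA K enumK A p0
        >= c * Ex P (fun w => knorm K enumK (vsub K (q w) p0) ^ 2).
Proof.
  pose proof (vA_is_max K enumK HfullK A HAne HAcpt) as Hmax.
  destruct Hflex as [H [Htd Hpd]].
  destruct (local_quadratic_bounds K enumK HfullK _ _ H Htd Hpd)
    as [g [m [Mq [d [Hm [HMq [Hd Hloc]]]]]]].
  destruct HAcpt as [_ [M HM]].
  destruct (excess_quadratic_on_simplex K enumK HfullK (vA K enumK A) p0 g m Mq d (Rabs M)
              Hm HMq Hd Hp0 (vA_convex K enumK A Hmax) (vA_bound K enumK HfullK A M Hmax HM) Hloc)
    as [C [c [HC [Hc Hpt]]]].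
  exists C, c. split; [exact HC|]. split; [exact Hc|].
  exact (voi_bounds K enumK (vA K enumK A) p0 g C c Hpt).
Qed.
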